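(* Let $A\in\mathbb{R}^{n\times n}$ be symmetric positive definite with eigenvalues $0<\lambda_1\le\cdots\le\lambda_n$, $\lambda_1<\lambda_n$, and a corresponding orthonormal basis of eigenvectors $v_1,\dots,v_n$, let $c\in\mathbb{R}^n$, and consider the Barzilai--Borwein (BB) method applied to $\min_{x\in\mathbb{R}^n}\frac12x^\top Ax-c^\top x$, started from an arbitrary $x_0\in\mathbb{R}^n$. Let $g_k=Ax_k-c$, write $g_k=\sum_{i=1}^n d_k^iv_i$, let $\kappa=\lambda_n/\lambda_1$ and $\theta=1-\frac1\kappa$. For $i=1,\dots,n$ let $C_i=\max\left\{\frac{\lambda_i}{\lambda_1}-1,\ 1-\frac{\lambda_i}{\lambda_n}\right\}$ and define recursively $$F_1=|d_0^1|,\qquad F_i=\max\left\{|d_0^i|,\ \frac{|d_1^i|}{\theta},\ \theta^{-2}C_i^2\sqrt{\textstyle\sum_{j=1}^{i-1}F_j^2}\right\}\quad(i\ge2).$$ Then for every $k\ge1$ and every $i=1,\dots,n$, $|d_k^i|\le F_i\theta^k$; in particular each sequence $\{d_k^i\}$ converges to $0$ at least $R$-linearly with rate $\theta=1-\frac1\kappa$.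
   Context: The BB method for this problem: $x_1=x_0-\alpha_0 g_0$ with the exact line-search (steepest descent) step $\alpha_0=\frac{g_0^\top g_0}{g_0^\top A g_0}$, and for $k\ge1$, $x_{k+1}=x_k-\alpha_k g_k$ with $\alpha_k=\frac{s_{k-1}^\top s_{k-1}}{s_{k-1}^\top y_{k-1}}$, $s_{k-1}=x_k-x_{k-1}$, $y_{k-1}=g_k-g_{k-1}$; for this quadratic this equals $\alpha_k=\frac{g_{k-1}^\top g_{k-1}}{g_{k-1}^\top A g_{k-1}}$. Equivalently, the coefficients satisfy $d_1^i=d_0^i\cdot\frac{\sum_{j}(\lambda_j-\lambda_i)(d_0^j)^2}{\sum_j\lambda_j(d_0^j)^2}$ and $d_{k+1}^i=d_k^i\cdot\frac{\sum_{j}(\lambda_j-\lambda_i)(d_{k-1}^j)^2}{\sum_j\lambda_j(d_{k-1}^j)^2}$ for $k\ge1$. Convention: if some gradient vanishes, the method has reached the minimizer and all subsequent gradients (coefficients) are taken to be zero. *)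

From HB Require Import structures.
From mathcomp Require Import all_boot all_order all_algebra.
From mathcomp Require Import reals.
Set Implicit Arguments. Unset Strict Implicit. Unset Printing Implicit Defensive.
Import Order.TTheory GRing.Theory Num.Theory.
Local Open Scope ring_scope.

Section BB.
Variables (R : realType) (m : nat) (A : 'M[R]_m) (c : 'cV[R]_m).

Definition grad (x : 'cV[R]_m) : 'cV[R]_m := A *m x - c.

Definition dotv (u v : 'cV[R]_m) : R := (u^T *m v) 0 0.

(* bb_pair x0 k = (x_k, x_{k+1}) for the BB method:
   x_1 = x_0 - alpha_0 g_0 with alpha_0 = g_0^T g_0 / g_0^T A g_0 (exact line search),
   x_{k+1} = x_k - alpha_k g_k with alpha_k = s^T s / s^T y,
   s = x_k - x_{k-1}, y = g_k - g_{k-1}  (k >= 1).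
   Note: x/0 = 0 in MathComp, so once a gradient vanishes the iterates
   stay at the minimizer and all later gradients are zero (the convention). *)
Fixpoint bb_pair (x0 : 'cV[R]_m) (k : nat) : 'cV[R]_m * 'cV[R]_m :=
  match k with
  | 0 => let g0 := grad x0 in
         (x0, x0 - (dotv g0 g0 / dotv g0 (A *m g0)) *: g0)
  | k'.+1 => let p := bb_pair x0 k' in
             let s := p.2 - p.1 in
             let y := grad p.2 - grad p.1 in
             (p.2, p.2 - (dotv s s / dotv s y) *: grad p.2)
  end.

Definition bb_iter (x0 : 'cV[R]_m) (k : nat) : 'cV[R]_m := (bb_pair x0 k).1.

End BB.

(* Recursive bound F_i (0-based index i here; paper's F_{i+1}).
   Faux a b C th i = (F_i, sum_{j<=i} F_j^2), where
   a j = |d_0^j|, b j = |d_1^j|, C j = C_j, th = theta: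
   F_0 = a 0,  F_i = max { a i, b i / th, th^-2 C_i^2 sqrt(sum_{j<i} F_j^2) }. *)
Fixpoint Faux (R : realType) (a b C : nat -> R) (th : R) (i : nat) : R * R :=
  match i with
  | 0 => (a 0%N, a 0%N ^+ 2)
  | i'.+1 =>
      let s := (Faux a b C th i').2 in
      let f := Num.max (a i) (Num.max (b i / th)
                  (th ^-2 * C i ^+ 2 * Num.sqrt s)) in
      (f, s + f ^+ 2)
  end.

Definition Fbound (R : realType) (a b C : nat -> R) (th : R) (i : nat) : R :=
  (Faux a b C th i).1.

From HB Require Import structures.
From mathcomp Require Import all_boot all_order all_algebra.
From mathcomp Require Import reals ring lra.
Import Order.TTheory GRing.Theory Num.Theory.
Set Implicit Arguments. Unset Strict Implicit.
Local Open Scope ring_scope.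

(* In the eigenbasis the BB iteration acts diagonally: its step at iteration
   k is the exact line-search step t of iteration k-1, and t lies in
   [1/lambda_n, 1/lambda_1], so d_{k+1}^i = (1 - lambda_i t) d_k^i.  When
   lambda_i t <= 1 this factor has modulus at most theta.  Otherwise component i
   overshoots, but sum_l (lambda_l t - 1) (d_k^l)^2 = 0 bounds it by the
   components with smaller eigenvalues, which gives
   |d_{k+2}^i| <= C_i^2 (sum_{l<i} (d_k^l)^2)^{1/2}.  Induction on i, and for
   fixed i on k in steps of two, then yields the bound F_i theta^k. *)

Section DotProduct.
Variables (R : realType) (m : nat).
Implicit Types (u v : 'cV[R]_m) (a : R).

Lemma dotvZl a u v : dotv (a *: u) v = a * dotv u v.
Proof. by rewrite /dotv linearZ /= -scalemxAl mxE. Qed.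

Lemma dotvZr a u v : dotv u (a *: v) = a * dotv u v.
Proof. by rewrite /dotv -scalemxAr mxE. Qed.

Lemma dotvv_eq0 u : dotv u u = 0 -> u = 0.
Proof.
rewrite /dotv mxE => uu0; apply/matrixP => i j; rewrite ord1 !mxE.
have /psumr_eq0P uu0i : forall l : 'I_m, true -> 0 <= u^T 0 l * u l 0.
  by move=> l _; rewrite mxE -expr2 sqr_ge0.
by have /eqP := uu0i uu0 i isT; rewrite mxE -expr2 sqrf_eq0 => /eqP.
Qed.

End DotProduct.

Section QuadraticModel.
Variables (R : realType) (m : nat) (A : 'M[R]_m) (c : 'cV[R]_m).
Hypothesis A_posdef : forall x : 'cV[R]_m, x != 0 -> 0 < (x^T *m A *m x) 0 0.

Definition cauchy_step (g : 'cV[R]_m) : R := dotv g g / dotv g (A *m g).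

Lemma gradB x y : grad A c x - grad A c y = A *m (x - y).
Proof. by rewrite /grad mulmxBr opprB addrA subrK. Qed.

Lemma gradZ x a g : grad A c (x - a *: g) = grad A c x - a *: (A *m g).
Proof. by rewrite /grad mulmxBr scalemxAr addrAC. Qed.

Lemma cauchy_stepZ a g : a != 0 -> cauchy_step (a *: g) = cauchy_step g.
Proof.
move=> a0; rewrite /cauchy_step -scalemxAr !dotvZl !dotvZr !mulrA invfM.
by rewrite mulrACA divff ?mul1r // mulf_neq0.
Qed.

Lemma cauchy_step_eq0 g : cauchy_step g = 0 -> g = 0.
Proof.
have [//|g0] := eqVneq g 0; have := A_posdef g0; rewrite -mulmxA -/(dotv _ _).
move=> gAg_gt0 /eqP; rewrite mulf_eq0 invr_eq0 (gt_eqF gAg_gt0) orbF.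
by move/eqP/dotvv_eq0.
Qed.

Lemma grad_bb_iter_eq0 x0 k :
  grad A c (bb_iter A c x0 k.-1) = 0 -> grad A c (bb_iter A c x0 k) = 0.
Proof.
case: k => [//|k] /= g0.
have [a ->] : exists a, bb_iter A c x0 k.+1 =
    bb_iter A c x0 k - a *: grad A c (bb_iter A c x0 k) by case: k g0; eexists.
by rewrite gradZ g0 mulmx0 scaler0 subr0.
Qed.

(* For k = 0 the lagged index k.-1 is 0: the first step is the exact line search. *)
Lemma bb_iterS x0 k :
  bb_iter A c x0 k.+1 =
  bb_iter A c x0 k - cauchy_step (grad A c (bb_iter A c x0 k.-1)) *: grad A c (bb_iter A c x0 k).
Proof.
elim: k => [//|k IH].
have -> : bb_iter A c x0 k.+2 = bb_iter A c x0 k.+1 -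
    cauchy_step (bb_iter A c x0 k.+1 - bb_iter A c x0 k) *: grad A c (bb_iter A c x0 k.+1).
  by rewrite /cauchy_step -gradB.
congr (_ - _ *: _); set a := cauchy_step _ in IH.
have -> : bb_iter A c x0 k.+1 - bb_iter A c x0 k = (- a) *: grad A c (bb_iter A c x0 k).
  by rewrite IH addrAC subrr add0r scaleNr.
have [a0|a0] := eqVneq a 0; last by rewrite cauchy_stepZ ?oppr_eq0.
(* A zero step only happens once the gradient has vanished. *)
by rewrite (grad_bb_iter_eq0 (cauchy_step_eq0 a0)) scaler0.
Qed.
End QuadraticModel.

Section RayleighCoefficients.
Variables (R : realFieldType) (m : nat) (lam : 'I_m -> R).
Implicit Type e : 'I_m -> R.

Definition sqnorm e : R := \sum_i e i ^+ 2.
Definition wsqnorm e : R := \sum_i lam i * e i ^+ 2.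
Definition inv_rayleigh e : R := sqnorm e / wsqnorm e.

Lemma sqnorm_ge0 e : 0 <= sqnorm e.
Proof. by apply: sumr_ge0 => i _; exact: sqr_ge0. Qed.

Lemma sqnorm_eq0 e : sqnorm e = 0 -> forall i, e i = 0.
Proof.
move=> /psumr_eq0P e0 i; apply/eqP; rewrite -sqrf_eq0; apply/eqP.
by apply: e0 => // l _; exact: sqr_ge0.
Qed.

End RayleighCoefficients.

Section EigenCoordinates.
Variables (R : realType) (m : nat) (A V : 'M[R]_m) (lam : 'I_m -> R).
Hypothesis V_orthonormal : V^T *m V = 1%:M.
Hypothesis V_eigen : forall i, A *m col i V = lam i *: col i V.
Implicit Types e f : 'I_m -> R.

Lemma sum_col_mulmx e : \sum_i e i *: col i V = V *m \col_i e i.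
Proof.
apply/matrixP => i j; rewrite summxE !mxE; apply: eq_bigr => l _.
by rewrite !mxE mulrC.
Qed.

Lemma dotv_sum_col e f :
  dotv (\sum_i e i *: col i V) (\sum_i f i *: col i V) = \sum_i e i * f i.
Proof.
rewrite !sum_col_mulmx /dotv trmx_mul -mulmxA (mulmxA V^T) V_orthonormal mul1mx.
by rewrite mxE; apply: eq_bigr => i _; rewrite !mxE.
Qed.

Lemma sum_col_inj e f :
  \sum_i e i *: col i V = \sum_i f i *: col i V -> e =1 f.
Proof.
rewrite !sum_col_mulmx => /(congr1 (mulmx V^T)).
rewrite !mulmxA V_orthonormal !mul1mx => /matrixP ef i.
by have := ef i 0; rewrite !mxE.
Qed.

Lemma mulmx_sum_col e :
  A *m (\sum_i e i *: col i V) = \sum_i (lam i * e i) *: col i V.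
Proof.
rewrite mulmx_sumr; apply: eq_bigr => i _.
by rewrite -scalemxAr V_eigen scalerA mulrC.
Qed.

Lemma cauchy_step_sum_col e :
  cauchy_step A (\sum_i e i *: col i V) = inv_rayleigh lam e.
Proof.
rewrite /cauchy_step mulmx_sum_col !dotv_sum_col /inv_rayleigh /sqnorm /wsqnorm.
by congr (_ / _); apply: eq_bigr => i _; rewrite expr2 mulrCA.
Qed.

Lemma bb_coef_recursion (c x0 : 'cV[R]_m) (d : nat -> 'I_m -> R) :
  (forall x : 'cV[R]_m, x != 0 -> 0 < (x^T *m A *m x) 0 0) ->
  (forall k, grad A c (bb_iter A c x0 k) = \sum_i d k i *: col i V) ->
  forall k i, d k.+1 i = (1 - lam i * inv_rayleigh lam (d k.-1)) * d k i.
Proof.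
move=> A_posdef grad_coord k; apply: sum_col_inj.
rewrite -grad_coord bb_iterS // gradZ (grad_coord k.-1) cauchy_step_sum_col.
rewrite grad_coord mulmx_sum_col scaler_sumr -sumrB; apply: eq_bigr => i _.
by rewrite scalerA -scalerBl mulrBl mul1r mulrA [_ * lam i]mulrC.
Qed.

End EigenCoordinates.

Lemma ler_sqrt_sum_sqr (R : rcfType) (I : finType) (P : pred I) (x y : I -> R) (a : R) :
  0 <= a -> (forall l, P l -> `|x l| <= a * y l) ->
  Num.sqrt (\sum_(l | P l) x l ^+ 2) <= a * Num.sqrt (\sum_(l | P l) y l ^+ 2).
Proof.
move=> a_ge0 xy; rewrite -[a]ger0_norm // -sqrtr_sqr -sqrtrM ?sqr_ge0 //.
rewrite ler_wsqrtr // mulr_sumr; apply: ler_sum => l Pl.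
rewrite -exprMn -real_normK ?num_real // ler_sqr ?nnegrE ?xy //.
exact: le_trans (normr_ge0 _) (xy l Pl).
Qed.

Section SpectralFactors.
Variables (R : rcfType) (n : nat) (lam : 'I_n.+1 -> R).
Hypothesis lam_mono : forall i j : 'I_n.+1, (i <= j)%N -> lam i <= lam j.
Hypothesis lam_min_gt0 : 0 < lam ord0.
Hypothesis lam_gap : lam ord0 < lam ord_max.
Implicit Type e : 'I_n.+1 -> R.

Definition bb_rate : R := 1 - lam ord0 / lam ord_max.
Definition bb_const i : R := Num.max (lam i / lam ord0 - 1) (1 - lam i / lam ord_max).

Lemma lam_min_le i : lam ord0 <= lam i.
Proof. exact: lam_mono. Qed.

Lemma lam_le_max i : lam i <= lam ord_max.
Proof. by apply: lam_mono; rewrite -ltnS. Qed.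

Lemma lam_ge0 i : 0 <= lam i.
Proof. exact: le_trans (ltW lam_min_gt0) (lam_min_le i). Qed.

Lemma lam_max_gt0 : 0 < lam ord_max.
Proof. exact: lt_trans lam_gap. Qed.

Lemma rate_gt0 : 0 < bb_rate.
Proof. by rewrite subr_gt0 ltr_pdivrMr ?mul1r // lam_max_gt0. Qed.

Lemma wsqnorm_ge e : lam ord0 * sqnorm e <= wsqnorm lam e.
Proof.
rewrite mulr_sumr; apply: ler_sum => i _.
by rewrite ler_wpM2r ?sqr_ge0 ?lam_min_le.
Qed.

Lemma wsqnorm_le e : wsqnorm lam e <= lam ord_max * sqnorm e.
Proof.
rewrite mulr_sumr; apply: ler_sum => i _.
by rewrite ler_wpM2r ?sqr_ge0 ?lam_le_max.
Qed.

Lemma inv_rayleigh_ge0 e : 0 <= inv_rayleigh lam e.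
Proof.
apply: divr_ge0 (sqnorm_ge0 e) (le_trans _ (wsqnorm_ge e)).
by rewrite mulr_ge0 ?sqnorm_ge0 ?ltW.
Qed.

Lemma wsqnorm_gt0 e : 0 < sqnorm e -> 0 < wsqnorm lam e.
Proof. by move=> G_gt0; apply: lt_le_trans (wsqnorm_ge e); rewrite mulr_gt0. Qed.

Lemma lam_min_inv_rayleigh e : lam ord0 * inv_rayleigh lam e <= 1.
Proof.
have [G0|G_ne0] := eqVneq (sqnorm e) 0.
  by rewrite /inv_rayleigh G0 mul0r mulr0 ler01.
have H_gt0 : 0 < wsqnorm lam e by rewrite wsqnorm_gt0 // lt_def G_ne0 sqnorm_ge0.
by rewrite mulrA ler_pdivrMr // mul1r wsqnorm_ge.
Qed.

Lemma lam_max_inv_rayleigh e : 0 < sqnorm e -> 1 <= lam ord_max * inv_rayleigh lam e.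
Proof.
move=> G_gt0; rewrite mulrA ler_pdivlMr ?wsqnorm_gt0 // mul1r.
exact: wsqnorm_le.
Qed.

Lemma mul_le_div_lam_min t i : lam ord0 * t <= 1 -> lam i * t <= lam i / lam ord0.
Proof.
by move=> t_le; rewrite ler_pdivlMr // -mulrA ler_piMr ?lam_ge0 // mulrC.
Qed.

Lemma div_lam_max_le_mul t i : 1 <= lam ord_max * t -> lam i / lam ord_max <= lam i * t.
Proof.
by move=> t_ge; rewrite ler_pdivrMr ?lam_max_gt0 // -mulrA ler_peMr ?lam_ge0 // mulrC.
Qed.

Lemma factor_le_rate t i :
  1 <= lam ord_max * t -> lam i * t <= 1 -> `|1 - lam i * t| <= bb_rate.
Proof.
move=> t_ge ti_le; rewrite ger0_norm ?subr_ge0 // lerD2l lerN2.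
have t_ge0 : 0 <= t by rewrite -(pmulr_rge0 _ lam_max_gt0) (le_trans ler01).
apply: le_trans (div_lam_max_le_mul ord0 t_ge) _.
by rewrite ler_wpM2r ?lam_min_le.
Qed.

Lemma factor_le_const t i :
  lam ord0 * t <= 1 -> 1 <= lam ord_max * t -> `|1 - lam i * t| <= bb_const i.
Proof.
move=> t_le t_ge; rewrite /bb_const le_max.
have [ti_le|ti_gt] := lerP (lam i * t) 1.
  by rewrite lerD2l lerN2 div_lam_max_le_mul ?orbT.
by rewrite lerD2r mul_le_div_lam_min.
Qed.

Lemma overshoot_le_const t i : lam ord0 * t <= 1 -> 1 < lam i * t ->
  lam i * t - 1 <= bb_const i /\ 1 - lam ord0 * t <= bb_const i.
Proof.
move=> t_le ti_gt; rewrite /bb_const !le_max.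
split; first by rewrite lerD2r mul_le_div_lam_min.
have t_gt0 : 0 < t.
  rewrite ltNge; apply: contraTN ti_gt => t_le0; rewrite -leNgt.
  by rewrite (le_trans _ ler01) // mulr_ge0_le0 ?lam_ge0.
set p := lam i / lam ord0; set w := lam ord0 * t.
have pw : p * w = lam i * t by rewrite /p /w mulrA divfK ?gt_eqF.
have w_gt0 : 0 < w by rewrite mulr_gt0.
have sq := sqr_ge0 (w - 1); apply/orP; left; nra.
Qed.

Lemma overshoot_mass e i : 0 < sqnorm e -> 1 <= lam i * inv_rayleigh lam e ->
  (lam i * inv_rayleigh lam e - 1) * e i ^+ 2 <=
  (1 - lam ord0 * inv_rayleigh lam e) * \sum_(l < n.+1 | (l < i)%N) e l ^+ 2.
Proof.
move=> G_gt0 ti_ge; set t := inv_rayleigh lam e.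
have balance : \sum_l (lam l * t - 1) * e l ^+ 2 = 0.
  have -> : \sum_l (lam l * t - 1) * e l ^+ 2 = t * wsqnorm lam e - sqnorm e.
    by rewrite mulr_sumr -sumrB; apply: eq_bigr => l _; ring.
  by rewrite divfK ?subrr ?gt_eqF ?wsqnorm_gt0.
rewrite (bigID (fun l : 'I_n.+1 => (l < i)%N)) /= in balance.
have upper : (lam i * t - 1) * e i ^+ 2 <=
    \sum_(l < n.+1 | ~~ (l < i)%N) (lam l * t - 1) * e l ^+ 2.
  rewrite (bigD1 i) /= ?ltnn // lerDl; apply: sumr_ge0 => l /andP[l_ge _].
  rewrite mulr_ge0 ?sqr_ge0 // subr_ge0 (le_trans ti_ge) // ler_wpM2r ?inv_rayleigh_ge0 //.
  by apply: lam_mono; rewrite leqNgt.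
have lower : (lam ord0 * t - 1) * \sum_(l < n.+1 | (l < i)%N) e l ^+ 2 <=
    \sum_(l < n.+1 | (l < i)%N) (lam l * t - 1) * e l ^+ 2.
  rewrite mulr_sumr; apply: ler_sum => l _.
  by rewrite ler_wpM2r ?sqr_ge0 // lerD2r ler_wpM2r ?inv_rayleigh_ge0 ?lam_min_le.
lra.
Qed.

Lemma overshoot_bound e i : 0 < sqnorm e -> 1 < lam i * inv_rayleigh lam e ->
  `|(1 - lam i * inv_rayleigh lam e) * e i| <=
  bb_const i * Num.sqrt (\sum_(l < n.+1 | (l < i)%N) e l ^+ 2).
Proof.
move=> G_gt0 ti_gt; have mass := overshoot_mass G_gt0 (ltW ti_gt).
have [up lo] := overshoot_le_const (lam_min_inv_rayleigh e) ti_gt.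
set t := inv_rayleigh lam e in ti_gt mass up lo *.
set S := \sum_(l < n.+1 | _) _ in mass *.
have S_ge0 : 0 <= S by apply: sumr_ge0 => l _; exact: sqr_ge0.
have C_ge0 : 0 <= bb_const i by apply: le_trans up; rewrite subr_ge0 ltW.
rewrite -[bb_const i]ger0_norm // -!sqrtr_sqr -sqrtrM ?sqr_ge0 // ler_wsqrtr //.
have u_ge0 : 0 <= lam i * t - 1 by rewrite subr_ge0 ltW.
have -> : ((1 - lam i * t) * e i) ^+ 2 = (lam i * t - 1) * ((lam i * t - 1) * e i ^+ 2).
  by ring.
rewrite expr2 -mulrA; apply: ler_pM => //; first by rewrite mulr_ge0 ?sqr_ge0.
by apply: le_trans mass _; rewrite ler_wpM2r.
Qed.

Section CoefficientBound.
Variable d : nat -> 'I_n.+1 -> R.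
Hypothesis d_rec : forall k i, d k.+1 i = (1 - lam i * inv_rayleigh lam (d k.-1)) * d k i.

Lemma coef_eq0 k i : sqnorm (d k.-1) = 0 -> d k i = 0.
Proof.
case: k => [|k] /= /sqnorm_eq0 d0; first exact: d0.
by rewrite d_rec d0 mulr0.
Qed.

Lemma sqnorm_prev_gt0 k : sqnorm (d k) != 0 -> 0 < sqnorm (d k.-1).
Proof.
move=> Gk; rewrite lt_def sqnorm_ge0 andbT; apply: contraNneq Gk => Gk1.
by apply/eqP; rewrite /sqnorm big1 // => i _; rewrite coef_eq0 // expr0n.
Qed.

Lemma coef_contract k i : lam i * inv_rayleigh lam (d k.-1) <= 1 ->
  `|d k.+1 i| <= bb_rate * `|d k i|.
Proof.
move=> ti_le; have [Gk|Gk] := eqVneq (sqnorm (d k)) 0.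
  by rewrite d_rec (sqnorm_eq0 Gk) !(mulr0, normr0).
rewrite d_rec normrM ler_wpM2r // factor_le_rate //.
exact: lam_max_inv_rayleigh (sqnorm_prev_gt0 Gk).
Qed.

Lemma coef_overshoot k i : 1 < lam i * inv_rayleigh lam (d k) ->
  `|d k.+2 i| <= bb_const i ^+ 2 * Num.sqrt (\sum_(l < n.+1 | (l < i)%N) d k l ^+ 2).
Proof.
move=> ti_gt.
have Gk : sqnorm (d k) != 0.
  by apply: contraTneq ti_gt => Gk; rewrite /inv_rayleigh Gk mul0r mulr0 ltr10.
have Gk_gt0 : 0 < sqnorm (d k) by rewrite lt_def Gk sqnorm_ge0.
have Gk1_gt0 := sqnorm_prev_gt0 Gk.
rewrite !d_rec /= mulrCA normrM expr2 -mulrA.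
have prev := factor_le_const i (lam_min_inv_rayleigh (d k.-1))
  (lam_max_inv_rayleigh Gk1_gt0).
exact: ler_pM (normr_ge0 _) (normr_ge0 _) prev (overshoot_bound Gk_gt0 ti_gt).
Qed.

Variable F : 'I_n.+1 -> R.
Hypothesis F_ge_d0 : forall i, `|d 0 i| <= F i.
Hypothesis F_ge_d1 : forall i : 'I_n.+1, (0 < i)%N -> `|d 1 i| <= F i * bb_rate.
Hypothesis F_ge_tail : forall i : 'I_n.+1, (0 < i)%N ->
  bb_const i ^+ 2 * Num.sqrt (\sum_(l < n.+1 | (l < i)%N) F l ^+ 2) <= F i * bb_rate ^+ 2.

Lemma coef_bound_at (i : 'I_n.+1) :
  (forall l : 'I_n.+1, (l < i)%N -> forall k, `|d k l| <= F l * bb_rate ^+ k) ->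
  forall k, `|d k i| <= F i * bb_rate ^+ k.
Proof.
move=> bound_lt.
suff bound2 k : `|d k i| <= F i * bb_rate ^+ k /\ `|d k.+1 i| <= F i * bb_rate ^+ k.+1.
  by move=> k; case: (bound2 k).
have rate_ge0 := ltW rate_gt0.
have at_ord0 e : i = 0 :> nat -> lam i * inv_rayleigh lam e <= 1.
  by move=> i0; rewrite (_ : i = ord0) ?lam_min_inv_rayleigh //; exact: val_inj.
elim: k => [|k [_ IH]].
  split; first by rewrite expr0 mulr1.
  have [i0|] := posnP i; last exact: F_ge_d1.
  rewrite expr1 mulrC; apply: le_trans (coef_contract (k := 0) (at_ord0 _ i0)) _.
  by rewrite ler_wpM2l.
split=> //.
have [ti_le|ti_gt] := lerP (lam i * inv_rayleigh lam (d k)) 1.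
  rewrite exprS mulrCA; apply: le_trans (coef_contract (k := k.+1) ti_le) _.
  by rewrite ler_wpM2l.
have i_gt0 : (0 < i)%N.
  by rewrite lt0n; apply: contraTneq ti_gt => i0; rewrite -leNgt at_ord0.
apply: le_trans (coef_overshoot ti_gt) _.
apply: (@le_trans _ _ (bb_const i ^+ 2 *
    (bb_rate ^+ k * Num.sqrt (\sum_(l < n.+1 | (l < i)%N) F l ^+ 2)))).
  rewrite ler_wpM2l ?sqr_ge0 // ler_sqrt_sum_sqr ?exprn_ge0 // => l l_lt.
  by rewrite mulrC bound_lt.
by rewrite mulrCA -[k.+2]addn2 exprD [F i * _]mulrCA ler_wpM2l ?exprn_ge0 ?F_ge_tail.
Qed.

Lemma coef_bound k i : `|d k i| <= F i * bb_rate ^+ k.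
Proof.
have [m i_lt] := ubnP i; elim: m i i_lt k => [//|m IHm] i i_lt k.
by apply: coef_bound_at => l l_lt; apply: IHm; exact: leq_trans l_lt _.
Qed.

End CoefficientBound.

End SpectralFactors.

Section FboundRecursion.
Variables (R : realType) (a b C : nat -> R) (th : R).
Local Notation F := (Fbound a b C th).

Lemma Faux_sqsum i : (Faux a b C th i).2 = \sum_(j < i.+1) F j ^+ 2.
Proof. by elim: i => [|i IH]; rewrite ?big_ord1 // big_ord_recr /= -IH. Qed.

Lemma FboundS i : F i.+1 = Num.max (a i.+1)
  (Num.max (b i.+1 / th) (th ^-2 * C i.+1 ^+ 2 * Num.sqrt (\sum_(j < i.+1) F j ^+ 2))).
Proof. by rewrite /Fbound /= Faux_sqsum. Qed.

Lemma Fbound_ge_a i : a i <= F i.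
Proof. by case: i => [//|i]; rewrite FboundS le_max lexx. Qed.

Lemma Fbound_ge_b i : (0 < i)%N -> b i / th <= F i.
Proof. by case: i => [//|i] _; rewrite FboundS !le_max lexx orbT. Qed.

Lemma Fbound_ge_sqrt i : (0 < i)%N ->
  th ^-2 * C i ^+ 2 * Num.sqrt (\sum_(j < i) F j ^+ 2) <= F i.
Proof. by case: i => [//|i] _; rewrite FboundS !le_max lexx !orbT. Qed.

End FboundRecursion.

Section FboundOrdinal.
Variables (R : realType) (n : nat) (a b C : 'I_n.+1 -> R) (th : R).
Hypothesis th_gt0 : 0 < th.
Let an j := a (inord j).
Let bn j := b (inord j).
Let Cn j := C (inord j).
Local Notation F := (Fbound an bn Cn th).

Lemma Fbound_ord_ge_a i : a i <= F i.
Proof. by have := @Fbound_ge_a R an bn Cn th i; rewrite /an inord_val. Qed.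

Lemma Fbound_ord_ge_b (i : 'I_n.+1) : (0 < i)%N -> b i <= F i * th.
Proof.
move=> i_gt0; rewrite -ler_pdivrMr //.
by have := @Fbound_ge_b R an bn Cn th i i_gt0; rewrite /bn inord_val.
Qed.

Lemma Fbound_ord_ge_sqrt (i : 'I_n.+1) : (0 < i)%N ->
  C i ^+ 2 * Num.sqrt (\sum_(l < n.+1 | (l < i)%N) F l ^+ 2) <= F i * th ^+ 2.
Proof.
move=> i_gt0; rewrite -ler_pdivrMr ?exprn_gt0 // mulrC mulrA.
have := @Fbound_ge_sqrt R an bn Cn th i i_gt0.
by rewrite /Cn inord_val (big_ord_narrow (ltnW (ltn_ord i))).
Qed.

End FboundOrdinal.

Unset Implicit Arguments.

Theorem theorem1 (R : realType) (n : nat) (A : 'M[R]_n.+1)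
  (lam : 'I_n.+1 -> R) (V : 'M[R]_n.+1) (c x0 : 'cV[R]_n.+1)
  (d : nat -> 'I_n.+1 -> R) :
  A^T = A ->
  (forall x : 'cV[R]_n.+1, x != 0 -> 0 < (x^T *m A *m x) 0 0) ->
  V^T *m V = 1%:M ->
  (forall i : 'I_n.+1, A *m col i V = lam i *: col i V) ->
  (forall i j : 'I_n.+1, (i <= j)%N -> lam i <= lam j) ->
  0 < lam ord0 ->
  lam ord0 < lam ord_max ->
  (forall k, grad A c (bb_iter A c x0 k) = \sum_(i < n.+1) d k i *: col i V) ->
  let kappa := lam ord_max / lam ord0 in
  let theta := 1 - 1 / kappa in
  let C (i : 'I_n.+1) :=
    Num.max (lam i / lam ord0 - 1) (1 - lam i / lam ord_max) in
  let F (i : 'I_n.+1) :=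
    Fbound (fun j => `|d 0%N (inord j)|) (fun j => `|d 1%N (inord j)|)
           (fun j => C (inord j)) theta i in
  forall k : nat, (1 <= k)%N ->
  forall i : 'I_n.+1, `|d k i| <= F i * theta ^+ k.
Proof.
move=> _ A_posdef V_orth V_eigen lam_mono lam_min_gt0 lam_gap grad_coord.
move=> kappa theta C F k _ i.
have theta_rate : theta = bb_rate lam by rewrite /theta /kappa div1r invf_div.
have theta_gt0 : 0 < theta by rewrite theta_rate rate_gt0.
pose a j := `|d 0%N j|; pose b j := `|d 1%N j|.
rewrite theta_rate; apply: (coef_bound lam_mono lam_min_gt0 lam_gap).
- exact: (bb_coef_recursion V_orth V_eigen A_posdef grad_coord).
- by move=> j; apply: (Fbound_ord_ge_a a b C).
- by move=> j j_gt0; rewrite -theta_rate (Fbound_ord_ge_b a b C theta_gt0).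
- by move=> j j_gt0; rewrite -theta_rate (Fbound_ord_ge_sqrt a b C theta_gt0).
Qed.
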